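(* Let $a,b,c,d\ge1$ be integers and let $$M=\begin{bmatrix}a&-1&-1&-1\\-1&b&-1&-1\\-1&-1&c&-1\\-1&-1&-1&d\end{bmatrix}.$$ If $\det M=0$ and two of $a,b,c,d$ equal $5$, then the other two are either $1$ and $5$ (in some order) or $2$ and $2$. *)

From mathcomp Require Import all_boot all_algebra.
Set Implicit Arguments. Unset Strict Implicit. Unset Printing Implicit Defensive.
Import GRing.Theory Num.Theory.
Local Open Scope ring_scope.

Definition Mmat (x : 'I_4 -> int) : 'M[int]_4 :=
  \matrix_(i < 4, j < 4) (if i == j then x i else -1).

Definition abcd (a b c d : int) (i : 'I_4) : int :=
  nth 0 [:: a; b; c; d] i.

From mathcomp Require Import all_boot all_algebra perm ring zify.
Import GRing.Theory Num.Theory.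
Local Open Scope ring_scope.

(* Permuting rows and columns simultaneously leaves det M unchanged, so we may
   put the two 5's first.  With X_m = x_m + 1 one has det M = e_4(X) - e_3(X),
   which for X = (6, 6, p + 1, q + 1) equals 6 ((2p - 1)(2q - 1) - 9); so
   2p - 1 and 2q - 1 are complementary positive divisors of 9. *)

Lemma perm_of_uniq_tuple n (t : n.-tuple 'I_n) :
  uniq t -> exists s : 'S_n, forall m, s m = tnth t m.
Proof. by move=> /tuple_uniqP t_inj; exists (perm t_inj) => m; rewrite permE. Qed.

Lemma det_row_col_perm (R : comNzRingType) n (s : 'S_n) (A : 'M[R]_n) :
  \det (row_perm s (col_perm s A)) = \det A.
Proof.
rewrite row_permE col_permE !det_mulmx !det_perm odd_permV.
by rewrite mulrCA -expr2 sqrr_sign mulr1.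
Qed.

Lemma eq_Mmat {x y : 'I_4 -> int} : x =1 y -> Mmat x = Mmat y.
Proof. by move=> exy; apply/matrixP=> i j; rewrite !mxE !exy. Qed.

Lemma Mmat_comp_perm (x : 'I_4 -> int) (s : 'S_4) :
  Mmat (x \o s) = row_perm s (col_perm s (Mmat x)).
Proof. by apply/matrixP=> i j; rewrite !mxE (inj_eq perm_inj). Qed.

Lemma det_Mmat_comp_perm (x : 'I_4 -> int) (s : 'S_4) :
  \det (Mmat (x \o s)) = \det (Mmat x).
Proof. by rewrite Mmat_comp_perm det_row_col_perm. Qed.

Lemma det_Mmat_abcd (a b c d : int) :
  \det (Mmat (abcd a b c d)) =
  (a + 1) * (b + 1) * (c + 1) * (d + 1)
  - ((b + 1) * (c + 1) * (d + 1) + (a + 1) * (c + 1) * (d + 1)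
     + (a + 1) * (b + 1) * (d + 1) + (a + 1) * (b + 1) * (c + 1)).
Proof.
do 3!rewrite !(expand_det_row _ ord0) !big_ord_recl !big_ord0 /cofactor.
by rewrite !det_mx11 !mxE /=; ring.
Qed.

Lemma abcd_comp_perm (x : 'I_4 -> int) (s : 'S_4) :
  x \o s =1 abcd (x (s 0)) (x (s 1)) (x (s 2)) (x (s 3)).
Proof. by case=> [[|[|[|[|m]]]] // Hm] /=; congr (x (s _)); apply: val_inj. Qed.

Lemma det_Mmat_two_fives_eq0 (p q : int) :
  \det (Mmat (abcd 5 5 p q)) = 0 <-> (2 * p - 1) * (2 * q - 1) = 9.
Proof.
have -> : \det (Mmat (abcd 5 5 p q)) = 6 * ((2 * p - 1) * (2 * q - 1) - 9).
  by rewrite det_Mmat_abcd; ring.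
by split=> [/eqP|->]; rewrite ?subrr ?mulr0 // mulf_eq0 subr_eq0 => /orP[|/eqP].
Qed.

Lemma two_fives_diophantine (p q : int) : 1 <= p -> 1 <= q ->
  (2 * p - 1) * (2 * q - 1) = 9 ->
  (p = 1 /\ q = 5) \/ (p = 5 /\ q = 1) \/ (p = 2 /\ q = 2).
Proof.
move=> p_ge1 q_ge1 prod9.
have p_le5 : p <= 5 by nia.
have : p = 1 \/ p = 2 \/ p = 3 \/ p = 4 \/ p = 5 by lia.
by case=> [|[|[|[|]]]] ep; rewrite ep in prod9 *; lia.
Qed.

Theorem lemma3p9 (a b c d : int) :
  1 <= a -> 1 <= b -> 1 <= c -> 1 <= d ->
  \det (Mmat (abcd a b c d)) = 0 ->
  forall i j k l : 'I_4,
    uniq [:: i; j; k; l] ->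
    abcd a b c d i = 5 -> abcd a b c d j = 5 ->
    (abcd a b c d k = 1 /\ abcd a b c d l = 5) \/
    (abcd a b c d k = 5 /\ abcd a b c d l = 1) \/
    (abcd a b c d k = 2 /\ abcd a b c d l = 2).
Proof.
move=> a_ge1 b_ge1 c_ge1 d_ge1 det0 i j k l uniq_ijkl xi5 xj5.
set x := abcd a b c d in det0 xi5 xj5 *.
have x_ge1 m : 1 <= x m by case: m => [[|[|[|[|m]]]]].
have [s s_ijkl] := @perm_of_uniq_tuple _ [tuple i; j; k; l] uniq_ijkl.
have [si sj sk sl] : [/\ s 0 = i, s 1 = j, s 2 = k & s 3 = l] by rewrite !s_ijkl.
have := det_Mmat_comp_perm x s.
rewrite det0 (eq_Mmat (abcd_comp_perm x s)) si sj sk sl xi5 xj5.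
move/det_Mmat_two_fives_eq0.
exact: two_fives_diophantine (x_ge1 k) (x_ge1 l).
Qed.
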